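(* Let $f(z)=e^z$. If $U,V\subset\mathbb{C}$ are nonempty and open, then there exists $n\geq 0$ such that $f^n(U)\cap V\neq\emptyset$.
   Context: $f^n$ denotes the $n$-th iterate of $f$. *)

From Stdlib Require Import Reals.
Open Scope R_scope.

Definition Cplx : Type := (R * R)%type.

(* Complex exponential: exp(x + i y) = e^x (cos y + i sin y). *)
Definition Cexp (z : Cplx) : Cplx :=
  (exp (fst z) * cos (snd z), exp (fst z) * sin (snd z)).

Definition Cdist (z w : Cplx) : R :=
  sqrt (Rsqr (fst z - fst w) + Rsqr (snd z - snd w)).

Definition C_open (U : Cplx -> Prop) : Prop :=
  forall z, U z -> exists r, 0 < r /\ forall w, Cdist w z < r -> U w.

Definition iterate (f : Cplx -> Cplx) (n : nat) : Cplx -> Cplx := Nat.iter n f.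

From Stdlib Require Import Reals ZArith Lra Lia Classical.
Open Scope R_scope.

(* First, the forward orbit of a nonempty open set [U] meets the real axis.  Otherwise
   measure neighbourhoods of an orbit point [p] by the largest [T] such that every [w] on
   the same side of the axis with [|w - p|^2 < T Im w Im p] is reached from [U].  Pulling
   back along the branch of [log] with values in the strip [k PI < Im < (k+1) PI] of [p],
   this [T] does not decrease, and it grows by [100/99] whenever [|Im p| >= 1/2].  An orbit
   avoiding the axis has [|Im| >= 1/2] infinitely often (close to the axis the real part
   grows linearly, and then the imaginary part grows geometrically), so [T] becomes
   larger than [2 PI + 1]; such a neighbourhood contains a point with [Im = k PI], whose
   image is real.

   Second, the iterates of a real point tend to infinity so fast that the local inverse
   branches along its orbit shrink distances by [1/4] at each step: hence some [f^n (U)]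
   contains the disk of radius [X / 2] around a real [X] as large as we like.  Every [v]
   off the real axis has a second preimage in that disk, obtained by taking a logarithm
   of [v] with imaginary part close to [exp (X - 1)] and then a logarithm of that with
   imaginary part close to [PI / 2]. *)

(** * Elementary estimates *)

Lemma PI_bounds : 3 < PI <= 4.
Proof. pose proof PI2_3_2; pose proof PI_4; lra. Qed.

Lemma sin_taylor_bounds a : 0 <= a -> a <= PI ->
  a - a ^ 3 / 6 <= sin a <= a - a ^ 3 / 6 + a ^ 5 / 120.
Proof.
  intros Ha0 Ha1; destruct (sin_bound a 0 Ha0 Ha1) as [Hlo Hhi].
  unfold sin_approx, sin_term in Hlo, Hhi; simpl in Hlo, Hhi; lra.
Qed.

Lemma cos_le_taylor a : - (PI / 2) <= a -> a <= PI / 2 -> cos a <= 1 - a ^ 2 / 2 + a ^ 4 / 24.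
Proof.
  intros Ha0 Ha1; destruct (cos_bound a 0 ltac:(lra) Ha1) as [_ Hhi].
  unfold cos_approx, cos_term in Hhi; simpl in Hhi; lra.
Qed.

Lemma sin_le_id x : 0 <= x -> sin x <= x.
Proof.
  intros Hx; destruct (Req_dec x 0) as [->|Hx0]; [rewrite sin_0; lra|].
  left; apply sin_lt_x; lra.
Qed.

Lemma Rabs_sin_Rabs y : Rabs (sin y) = Rabs (sin (Rabs y)).
Proof.
  destruct (Rle_dec 0 y).
  - now rewrite (Rabs_pos_eq y).
  - now rewrite (Rabs_left y), sin_neg, Rabs_Ropp by lra.
Qed.

Lemma Rabs_sin_le y : Rabs (sin y) <= Rabs y.
Proof.
  rewrite Rabs_sin_Rabs; pose proof (Rabs_pos y); pose proof PI_bounds.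
  destruct (Rle_dec (Rabs y) PI).
  - rewrite Rabs_pos_eq by (apply sin_ge_0; lra); now apply sin_le_id.
  - pose proof (SIN_bound (Rabs y)); apply Rabs_le; lra.
Qed.

Lemma Rabs_sin_le_contract y : 1 / 2 <= Rabs y -> Rabs (sin y) <= 99 / 100 * Rabs y.
Proof.
  intros Hy; rewrite Rabs_sin_Rabs; set (s := Rabs y) in *; pose proof PI_bounds.
  destruct (Rle_dec s 2).
  - rewrite Rabs_pos_eq by (apply sin_ge_0; lra).
    destruct (sin_taylor_bounds s ltac:(lra) ltac:(lra)) as [_ Hs].
    assert (s ^ 2 <= 4) by nra.
    assert (1 / 4 <= s ^ 2) by nra.
    assert (1 / 100 - s ^ 2 / 6 + s ^ 2 * s ^ 2 / 120 <= 0) by nra.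
    nra.
  - pose proof (SIN_bound s); apply Rabs_le; lra.
Qed.

Lemma Rabs_sin_ge y : Rabs y <= PI -> Rabs y - Rabs y ^ 3 / 6 <= Rabs (sin y).
Proof.
  intros Hy; rewrite Rabs_sin_Rabs; pose proof (Rabs_pos y) as Hy0.
  destruct (sin_taylor_bounds (Rabs y) Hy0 Hy) as [Hlo _].
  rewrite (Rabs_pos_eq (sin (Rabs y))) by (apply sin_ge_0; lra); lra.
Qed.

Lemma cos_ge_quadratic y : 1 - y ^ 2 / 2 <= cos y.
Proof.
  pose proof (cos_2a_sin (y / 2)) as Hc; replace (2 * (y / 2)) with y in Hc by field.
  pose proof (Rabs_sin_le (y / 2)); pose proof (Rabs_pos (sin (y / 2))).
  assert (Rabs (sin (y / 2)) ^ 2 <= Rabs (y / 2) ^ 2) by (apply pow_incr; lra).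
  rewrite !pow2_abs in *; lra.
Qed.

Lemma mul_cos_le_sin h : 0 <= h -> h <= PI / 2 -> h * cos h <= sin h.
Proof.
  intros Hh0 Hh1; pose proof PI_bounds.
  destruct (sin_taylor_bounds h Hh0 ltac:(lra)) as [Hs _].
  pose proof (cos_le_taylor h ltac:(lra) Hh1) as Hc.
  assert (h ^ 2 <= 4) by nra.
  assert (h * cos h <= h * (1 - h ^ 2 / 2 + h ^ 4 / 24)) by (apply Rmult_le_compat_l; lra).
  assert (0 <= h ^ 3) by (apply pow_le; lra).
  nra.
Qed.

Lemma mul_cos_le_sin_contract t : 1 / 4 <= t -> t <= PI / 2 -> t * cos t <= 99 / 100 * sin t.
Proof.
  intros Ht0 Ht1; pose proof PI_bounds.
  destruct (sin_taylor_bounds t ltac:(lra) ltac:(lra)) as [Hs _].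
  pose proof (cos_le_taylor t ltac:(lra) Ht1) as Hc.
  assert (t ^ 2 <= 4) by nra; assert (1 / 16 <= t ^ 2) by nra.
  assert (t * cos t <= t * (1 - t ^ 2 / 2 + t ^ 4 / 24)) by (apply Rmult_le_compat_l; lra).
  assert (1 / 100 - 67 / 200 * t ^ 2 + t ^ 2 * t ^ 2 / 24 <= 0) by nra.
  nra.
Qed.

Lemma sin_ratio_antitone h t : 0 < h -> h <= t -> t <= PI / 2 -> h * sin t <= t * sin h.
Proof.
  intros Hh Hht Ht; pose proof PI_bounds.
  replace t with (h + (t - h)) at 1 by ring; rewrite sin_plus.
  pose proof (COS_bound (t - h)); pose proof (sin_le_id (t - h) ltac:(lra)).
  assert (0 <= sin h) by (apply sin_ge_0; lra).
  assert (0 <= cos h) by (apply cos_ge_0; lra).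
  pose proof (mul_cos_le_sin h ltac:(lra) ltac:(lra)).
  assert (h * (sin h * cos (t - h)) <= h * sin h) by (apply Rmult_le_compat_l; nra).
  assert (h * (cos h * sin (t - h)) <= h * cos h * (t - h))
    by (rewrite <- Rmult_assoc; apply Rmult_le_compat_l; nra).
  nra.
Qed.

Lemma exp_add_exp_opp a : exp a + exp (- a) = 2 + (2 * sinh (a / 2)) ^ 2.
Proof.
  unfold sinh; replace a with (a / 2 + a / 2) at 1 by field;
  replace (- a) with (- (a / 2) + - (a / 2)) by field.
  rewrite !exp_plus, exp_Ropp; pose proof (exp_pos (a / 2)); field; lra.
Qed.

Lemma sinh_ge_id s : 0 <= s -> s <= sinh s.
Proof.
  intros Hs.
  assert (Hder : forall x, derivable_pt_lim (fun x => sinh x - x) x (cosh x - 1)).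
  { intros x; apply (derivable_pt_lim_minus sinh id);
      [apply derivable_pt_lim_sinh | apply derivable_pt_lim_id]. }
  assert (Hmono : increasing (fun x => sinh x - x)).
  { apply (nonneg_derivative_1 _ (fun x => exist _ _ (Hder x))); intros x.
    rewrite (derive_pt_eq_0 _ _ _ _ (Hder x)); unfold cosh; rewrite exp_add_exp_opp.
    pose proof (pow2_ge_0 (2 * sinh (x / 2))); lra. }
  pose proof (Hmono 0 s Hs) as H0s; simpl in H0s; rewrite sinh_0 in H0s; lra.
Qed.

Lemma cosh_ge_quadratic a : 2 + a ^ 2 <= exp a + exp (- a).
Proof.
  rewrite exp_add_exp_opp.
  destruct (Rle_dec 0 a).
  - pose proof (sinh_ge_id (a / 2) ltac:(lra)); nra.
  - pose proof (sinh_ge_id (- (a / 2)) ltac:(lra)).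
    unfold sinh in *; rewrite Ropp_involutive in *; nra.
Qed.

Lemma ln_le_compat x y : 0 < x -> x <= y -> ln x <= ln y.
Proof. intros Hx [Hxy| ->]; [left; now apply ln_increasing | lra]. Qed.

Lemma ln_sq_le r : 1 / 2 <= r -> ln r ^ 2 <= 4 * (r - 1) ^ 2.
Proof.
  intros Hr.
  assert (Hup : ln r <= r - 1)
    by (pose proof (exp_ineq1_le (ln r)); rewrite exp_ln in * by lra; lra).
  assert (Hlo : 1 - / r <= ln r).
  { pose proof (exp_ineq1_le (ln (/ r))).
    rewrite exp_ln, ln_Rinv in * by (try apply Rinv_0_lt_compat; lra); lra. }
  destruct (Rle_dec 1 r).
  - assert (0 <= ln r) by (rewrite <- ln_1; apply ln_le_compat; lra); nra.
  - assert (2 * (r - 1) <= 1 - / r).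
    { apply (Rmult_le_reg_r r); [lra|]; rewrite Rmult_minus_distr_r, Rinv_l by lra; nra. }
    assert (ln r <= 0) by lra; nra.
Qed.

Lemma Rabs_atan_le t : Rabs (atan t) <= Rabs t.
Proof.
  assert (Hpos : forall u, 0 <= u -> 0 <= atan u <= u).
  { intros u Hu; destruct (atan_bound u) as [B1 B2].
    assert (Ha : 0 <= atan u).
    { destruct (Req_dec u 0) as [->|]; [rewrite atan_0; lra|].
      left; rewrite <- atan_0; apply atan_increasing; lra. }
    split; [lra|].
    assert (Hc : 0 < cos (atan u)) by (apply cos_gt_0; lra).
    pose proof (tan_atan u) as Ht; unfold tan in Ht.
    pose proof (mul_cos_le_sin (atan u) Ha ltac:(lra)).
    assert (sin (atan u) = u * cos (atan u)).
    { transitivity (sin (atan u) / cos (atan u) * cos (atan u)); [field; lra | now rewrite Ht]. }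
    apply (Rmult_le_reg_r (cos (atan u))); nra. }
  destruct (Rle_dec 0 t).
  - destruct (Hpos t r); rewrite !Rabs_pos_eq; lra.
  - destruct (Hpos (- t) ltac:(lra)); rewrite atan_opp in *.
    rewrite (Rabs_left t), Rabs_left1; lra.
Qed.

Lemma exp_ge_affine x : x + 3 / 4 <= 7 / 8 * exp x.
Proof.
  destruct (Rle_dec x 1).
  - pose proof (exp_ineq1_le x); lra.
  - replace x with (1 + (x - 1)) at 2 by ring; rewrite exp_plus.
    pose proof (exp_ineq1_le 1); pose proof (exp_ineq1_le (x - 1)); nra.
Qed.

Lemma exists_nat_gt r : exists n : nat, r < INR n.
Proof. destruct (INR_archimed 1 r ltac:(lra)) as [n Hn]; exists n; lra. Qed.

(** * Strips between consecutive zeros of [sin] *)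

Lemma pi_floor y : exists k : Z, IZR k * PI <= y < IZR k * PI + PI.
Proof.
  pose proof PI_bounds; exists (Zfloor (y / PI)).
  destruct (Zfloor_bound (y / PI)) as [B1 B2].
  split.
  - apply (Rmult_le_reg_r (/ PI)); [apply Rinv_0_lt_compat; lra|].
    replace (y * / PI) with (y / PI) by reflexivity; rewrite Rinv_r_simpl_l; lra.
  - apply (Rmult_lt_reg_r (/ PI)); [apply Rinv_0_lt_compat; lra|].
    replace ((IZR (Zfloor (y / PI)) * PI + PI) * / PI) with (IZR (Zfloor (y / PI)) + 1)
      by (field; lra); exact B2.
Qed.

Lemma sin_pi_multiple_add k t : sin (IZR k * PI + t) = cos (IZR k * PI) * sin t.
Proof. rewrite sin_plus, sin_eq_0_1 by (now exists k); ring. Qed.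

Lemma cos_pi_multiple_add k t : cos (IZR k * PI + t) = cos (IZR k * PI) * cos t.
Proof. rewrite cos_plus, sin_eq_0_1 by (now exists k); ring. Qed.

Lemma cos_pi_multiple_sq k : cos (IZR k * PI) * cos (IZR k * PI) = 1.
Proof.
  pose proof (sin2_cos2 (IZR k * PI)); rewrite sin_eq_0_1 in * by (now exists k).
  unfold Rsqr in *; lra.
Qed.

Definition same_strip (y y' : R) : Prop :=
  exists k : Z, IZR k * PI < y < IZR k * PI + PI /\ IZR k * PI < y' < IZR k * PI + PI.

Lemma same_strip_spec y y' : same_strip y y' ->
  0 < sin y * sin y' /\ Rabs (y - y') < PI /\ 0 < y * y'.
Proof.
  intros [k [Hy Hy']]; pose proof PI_bounds; set (c := IZR k * PI) in *.
  split; [|split].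
  - replace y with (IZR k * PI + (y - c)) by (unfold c; ring).
    replace y' with (IZR k * PI + (y' - c)) by (unfold c; ring).
    rewrite !sin_pi_multiple_add.
    replace (_ * _) with (cos (IZR k * PI) * cos (IZR k * PI) * (sin (y - c) * sin (y' - c)))
      by ring.
    rewrite cos_pi_multiple_sq, Rmult_1_l.
    apply Rmult_lt_0_compat; apply sin_gt_0; lra.
  - apply Rabs_def1; lra.
  - destruct (Z_lt_le_dec k 0) as [Hk|Hk].
    + assert (IZR k <= -1) by (apply IZR_le; lia); assert (c + PI <= 0) by (unfold c; nra); nra.
    + apply IZR_le in Hk; simpl in Hk; assert (0 <= c) by (unfold c; nra); nra.
Qed.

Definition admissible_factor (k y : R) : Prop := k = 1 \/ (k = 99 / 100 /\ 1 / 2 <= Rabs y).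

Lemma admissible_factor_bounds k y : admissible_factor k y -> 1 / 4 <= k <= 1.
Proof. intros [->|[-> _]]; lra. Qed.

Lemma admissible_factor_Ropp k y : admissible_factor k y -> admissible_factor k (- y).
Proof. intros [->|[-> Hy]]; [now left | right; now rewrite Rabs_Ropp]. Qed.

Lemma sin_mul_le_mul y y' k : same_strip y y' -> admissible_factor k y ->
  sin y * sin y' <= k * (y * y').
Proof.
  intros HS Hk; destruct (same_strip_spec y y' HS) as [Hs [_ Hp]].
  assert (A : Rabs (sin y) <= k * Rabs y).
  { destruct Hk as [->|[-> Hy]];
      [rewrite Rmult_1_l; apply Rabs_sin_le | now apply Rabs_sin_le_contract]. }
  pose proof (Rabs_sin_le y') as B.
  assert (Habs : Rabs (sin y) * Rabs (sin y') <= k * Rabs y * Rabs y')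
    by (apply Rmult_le_compat; auto; apply Rabs_pos).
  now rewrite <- Rabs_mult, Rmult_assoc, <- Rabs_mult, !Rabs_pos_eq in Habs by lra.
Qed.

Lemma chord_estimate_first_strip M m k : 0 < m -> m <= M -> M < PI ->
  (k = 1 \/ (k = 99 / 100 /\ 1 / 2 <= M)) ->
  sin M * sin m * (M - m) ^ 2 <= k * (M * m) * (4 * sin ((M - m) / 2) ^ 2).
Proof.
  intros Hm HmM HM Hk; pose proof PI_bounds.
  assert (Hk4 : 1 / 4 <= k) by (destruct Hk as [->|[-> _]]; lra).
  set (t := M / 2); set (h := (M - m) / 2).
  replace (M - m) with (2 * h) by (unfold h; field).
  replace (2 * h / 2) with h by field.
  destruct (Req_dec h 0) as [Hh0|Hh0].
  { rewrite Hh0, sin_0; lra. }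
  assert (Hh : 0 < h) by (unfold h in *; lra).
  assert (Hht : h <= t) by (unfold h, t; lra).
  assert (Ht : t <= PI / 2) by (unfold t; lra).
  assert (Hst : 0 < sin t) by (apply sin_gt_0; unfold t; lra).
  assert (0 < sin h) by (apply sin_gt_0; lra).
  assert (0 <= cos t) by (apply cos_ge_0; lra).
  assert (Hcos : t * cos t <= k * sin t).
  { destruct Hk as [->|[-> HM2]].
    - rewrite Rmult_1_l; apply mul_cos_le_sin; lra.
    - apply mul_cos_le_sin_contract; unfold t; lra. }
  pose proof (sin_ratio_antitone h t Hh Hht Ht) as Hratio.
  (* Halving [M]: [sin M = 2 sin t cos t], and [sin t / t <= sin h / h]. *)
  assert (Hkey : sin t * cos t * h ^ 2 <= k * t * sin h ^ 2).
  { apply (Rmult_le_reg_l t); [lra|].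
    assert ((h * sin t) ^ 2 <= (t * sin h) ^ 2) by (apply pow_incr; split; nra).
    assert (t * cos t * (sin t * h ^ 2) <= k * sin t * (sin t * h ^ 2))
      by (apply Rmult_le_compat_r; nra).
    nra. }
  assert (HsM : sin M = 2 * sin t * cos t) by (rewrite <- sin_2a; unfold t; f_equal; field).
  pose proof (sin_le_id m ltac:(lra)).
  assert (0 <= sin M) by (rewrite HsM; nra).
  assert (sin M * sin m * (2 * h) ^ 2 <= sin M * m * (2 * h) ^ 2)
    by (apply Rmult_le_compat_r; [nra | apply Rmult_le_compat_l; lra]).
  replace M with (2 * t) at 2 by (unfold t; field).
  assert (8 * m * (sin t * cos t * h ^ 2) <= 8 * m * (k * t * sin h ^ 2))
    by (apply Rmult_le_compat_l; lra).
  rewrite HsM in *; nra.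
Qed.

Lemma sin_sq_half_Rabs d : sin (d / 2) ^ 2 = sin (Rabs d / 2) ^ 2.
Proof.
  destruct (Rle_dec 0 d); [now rewrite Rabs_pos_eq|].
  rewrite Rabs_left by lra; replace (- d / 2) with (- (d / 2)) by field; rewrite sin_neg; ring.
Qed.

Lemma chord_estimate_far y y' k : PI <= y -> PI <= y' -> Rabs (y - y') < PI -> 1 / 4 <= k ->
  sin y * sin y' * (y' - y) ^ 2 <= k * (y * y') * (4 * sin ((y' - y) / 2) ^ 2).
Proof.
  intros Hy Hy' Hd Hk; pose proof PI_bounds.
  rewrite sin_sq_half_Rabs, <- (pow2_abs (y' - y)), Rabs_minus_sym.
  set (h := Rabs (y - y') / 2); replace (Rabs (y - y')) with (2 * h) by (unfold h; field).
  assert (Hh0 : 0 <= h) by (unfold h; pose proof (Rabs_pos (y - y')); lra).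
  assert (Hh1 : h < PI / 2) by (unfold h; lra).
  (* Jordan's inequality [sin h >= 2 h / PI]. *)
  assert (Hjordan : 2 * h / PI <= sin h).
  { destruct (Req_dec h 0) as [->|]; [rewrite sin_0; lra|].
    pose proof (sin_ratio_antitone h (PI / 2) ltac:(lra) ltac:(lra) ltac:(lra)) as R.
    rewrite sin_PI2 in R; apply (Rmult_le_reg_l (PI / 2)); [lra|].
    replace (PI / 2 * (2 * h / PI)) with h by (field; lra); lra. }
  assert (sin y * sin y' <= 1) by (pose proof (SIN_bound y); pose proof (SIN_bound y'); nra).
  assert (PI ^ 2 <= y * y') by nra.
  assert (0 <= 2 * h / PI) by (apply Rmult_le_pos; [lra | left; apply Rinv_0_lt_compat; lra]).
  assert ((2 * h / PI) ^ 2 <= sin h ^ 2) by (apply pow_incr; lra).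
  assert (PI ^ 2 * (2 * h / PI) ^ 2 = 4 * h ^ 2) by (field; lra).
  assert (k * PI ^ 2 * (4 * (2 * h / PI) ^ 2) <= k * (y * y') * (4 * sin h ^ 2))
    by (apply Rmult_le_compat; nra).
  nra.
Qed.

Lemma chord_estimate_pos y y' k : 0 < y -> 0 < y' -> 0 < sin y * sin y' -> Rabs (y - y') < PI ->
  admissible_factor k y ->
  sin y * sin y' * (y' - y) ^ 2 <= k * (y * y') * (4 * sin ((y' - y) / 2) ^ 2).
Proof.
  intros Hy Hy' Hs Hd Hk; pose proof PI_bounds; pose proof (admissible_factor_bounds k y Hk).
  apply Rabs_def2 in Hd.
  destruct (Rlt_dec y PI) as [HyPI|HyPI]; destruct (Rlt_dec y' PI) as [Hy'PI|Hy'PI].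
  - destruct (Rle_dec y' y).
    + rewrite sin_sq_half_Rabs, <- (pow2_abs (y' - y)), Rabs_minus_sym, Rabs_pos_eq by lra.
      apply chord_estimate_first_strip; try lra.
      destruct Hk as [->|[-> Ha]]; [left | right; rewrite Rabs_pos_eq in Ha]; lra.
    + rewrite (Rmult_comm (sin y)), (Rmult_comm y).
      apply chord_estimate_first_strip; try lra.
      destruct Hk as [->|[-> Ha]]; [left | right; rewrite Rabs_pos_eq in Ha]; lra.
  - assert (sin y' <= 0) by (apply sin_le_0; lra).
    assert (0 < sin y) by (apply sin_gt_0; lra); nra.
  - assert (sin y <= 0) by (apply sin_le_0; lra).
    assert (0 < sin y') by (apply sin_gt_0; lra); nra.
  - apply chord_estimate_far; try lra; apply Rabs_def1; lra.
Qed.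

Lemma chord_estimate y y' k : same_strip y y' -> admissible_factor k y ->
  sin y * sin y' * (y' - y) ^ 2 <= k * (y * y') * (4 * sin ((y' - y) / 2) ^ 2).
Proof.
  intros HS Hk; destruct (same_strip_spec y y' HS) as [Hs [Hd Hp]].
  destruct (Rlt_dec 0 y) as [Hy|Hy].
  - apply chord_estimate_pos; auto; nra.
  - assert (Hneg := chord_estimate_pos (- y) (- y') k).
    rewrite !sin_neg in Hneg.
    replace (- y' - - y) with (- (y' - y)) in Hneg by ring.
    replace (- (y' - y) / 2) with (- ((y' - y) / 2)) in Hneg by field.
    rewrite sin_neg in Hneg.
    replace (- y - - y') with (- (y - y')) in Hneg by ring; rewrite Rabs_Ropp in Hneg.
    assert (y < 0) by (destruct (Req_dec y 0); [subst; lra | lra]).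
    specialize (Hneg ltac:(lra) ltac:(nra) ltac:(lra) Hd (admissible_factor_Ropp k y Hk)).
    replace (- sin y * - sin y') with (sin y * sin y') in Hneg by ring.
    replace (- y * - y') with (y * y') in Hneg by ring.
    now rewrite <- !Rsqr_pow2, <- !Rsqr_neg, !Rsqr_pow2 in Hneg.
Qed.

(** * Expansion of [Cexp] inside a strip *)

Definition sqdist (z w : Cplx) : R := (fst z - fst w) ^ 2 + (snd z - snd w) ^ 2.

Lemma sqdist_ge_0 z w : 0 <= sqdist z w.
Proof.
  unfold sqdist; pose proof (pow2_ge_0 (fst z - fst w)); pose proof (pow2_ge_0 (snd z - snd w)).
  lra.
Qed.

Lemma sqdist_Cexp z p :
  sqdist (Cexp z) (Cexp p) = exp (fst z) * exp (fst p) *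
    (exp (fst z - fst p) + exp (- (fst z - fst p)) - 2 + 4 * sin ((snd z - snd p) / 2) ^ 2).
Proof.
  destruct z as [x' y'], p as [x y]; unfold sqdist, Cexp; cbn [fst snd].
  pose proof (cos_2a_sin ((y' - y) / 2)) as Hc.
  replace (2 * ((y' - y) / 2)) with (y' - y) in Hc by field; rewrite cos_minus in Hc.
  assert (Hsin : 4 * sin ((y' - y) / 2) ^ 2 = 2 - 2 * (cos y' * cos y + sin y' * sin y)) by lra.
  assert (Ex' : exp x * exp x' * exp (x' - x) = exp x' * exp x')
    by (rewrite (Rmult_comm (exp x)), Rmult_assoc, <- exp_plus; do 2 f_equal; ring).
  assert (Ex : exp x * exp x' * exp (- (x' - x)) = exp x * exp x)
    by (rewrite Rmult_assoc, <- exp_plus; do 2 f_equal; ring).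
  pose proof (sin2_cos2 y) as Hy; pose proof (sin2_cos2 y') as Hy'; unfold Rsqr in *.
  rewrite Hsin, !Rmult_plus_distr_l, !Rmult_minus_distr_l.
  transitivity (exp x' * exp x' * (sin y' * sin y' + cos y' * cos y')
    + exp x * exp x * (sin y * sin y + cos y * cos y)
    - 2 * (exp x * exp x') * (cos y' * cos y + sin y' * sin y)); [ring|].
  rewrite Hy, Hy'; lra.
Qed.

(* For [z] and [p] in one strip, the ratio [sqdist z p / (Im z Im p)] is multiplied by at
   least [1 / k] under [Cexp]. *)
Lemma Cexp_expands_in_strip (p z : Cplx) k :
  same_strip (snd p) (snd z) -> admissible_factor k (snd p) ->
  sqdist z p * (snd (Cexp z) * snd (Cexp p)) <= k * sqdist (Cexp z) (Cexp p) * (snd z * snd p).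
Proof.
  intros HS Hk; rewrite sqdist_Cexp.
  pose proof (sin_mul_le_mul _ _ k HS Hk) as Hsin.
  pose proof (chord_estimate _ _ k HS Hk) as Hchord.
  destruct (same_strip_spec _ _ HS) as [_ [_ Hyy]].
  destruct p as [x y], z as [x' y']; unfold sqdist, Cexp in *; cbn [fst snd] in *.
  set (a := x' - x) in *; set (s := sin ((y' - y) / 2)) in *.
  pose proof (cosh_ge_quadratic a) as Hcosh; pose proof (admissible_factor_bounds k y Hk).
  assert (Hcore : (a ^ 2 + (y' - y) ^ 2) * (sin y * sin y')
                  <= k * (exp a + exp (- a) - 2 + 4 * s ^ 2) * (y * y')).
  { assert (0 <= a ^ 2) by apply pow2_ge_0.
    assert (a ^ 2 * (sin y * sin y') <= a ^ 2 * (k * (y * y'))) by (apply Rmult_le_compat_l; lra).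
    assert (k * a ^ 2 * (y * y') <= k * (exp a + exp (- a) - 2) * (y * y'))
      by (apply Rmult_le_compat_r; [lra | apply Rmult_le_compat_l; lra]).
    nra. }
  assert (HE : 0 < exp x' * exp x) by (apply Rmult_lt_0_compat; apply exp_pos).
  replace ((a ^ 2 + (y' - y) ^ 2) * (exp x' * sin y' * (exp x * sin y)))
    with (exp x' * exp x * ((a ^ 2 + (y' - y) ^ 2) * (sin y * sin y'))) by (unfold a; ring).
  replace (k * (exp x' * exp x * (exp a + exp (- a) - 2 + 4 * s ^ 2)) * (y' * y))
    with (exp x' * exp x * (k * (exp a + exp (- a) - 2 + 4 * s ^ 2) * (y * y'))) by ring.
  apply Rmult_le_compat_l; lra.
Qed.

(** * Logarithms with prescribed imaginary part *)

Lemma polar_upper_half u v : 0 < v ->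
  exists t, 0 < t < PI /\ u = sqrt (u ^ 2 + v ^ 2) * cos t /\ v = sqrt (u ^ 2 + v ^ 2) * sin t.
Proof.
  intros Hv; set (r := sqrt (u ^ 2 + v ^ 2)).
  assert (Hrr : r * r = u ^ 2 + v ^ 2) by (apply sqrt_sqrt; nra).
  assert (Hr : 0 < r) by (apply sqrt_lt_R0; nra).
  assert (Hq : -1 < u / r < 1).
  { split; [apply (Rmult_lt_reg_r r) | apply (Rmult_lt_reg_r r)]; try lra;
      unfold Rdiv; rewrite Rmult_assoc, Rinv_l, Rmult_1_r by lra; nra. }
  exists (acos (u / r)); split; [now apply acos_bound_lt|].
  rewrite cos_acos, sin_acos by lra; split; [field; lra|].
  replace (1 - (u / r)²) with ((v / r)²).
  2:{ unfold Rsqr; transitivity ((r * r - u ^ 2) / (r * r)); [|field; lra].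
        rewrite Hrr at 1; field; lra. }
  rewrite sqrt_Rsqr by (apply Rlt_le, Rdiv_lt_0_compat; lra); field; lra.
Qed.

Lemma Cexp_log_same_strip y (w : Cplx) : 0 < snd w * sin y ->
  exists z, Cexp z = w /\ fst z = ln (sqrt (fst w ^ 2 + snd w ^ 2)) /\ same_strip y (snd z).
Proof.
  destruct w as [u v]; cbn [fst snd]; intros Hw; pose proof PI_bounds.
  destruct (pi_floor y) as [k Hk]; set (c := IZR k * PI) in *.
  set (eps := cos c); pose proof (cos_pi_multiple_sq k) as Heps; fold c eps in Heps.
  assert (Hy : sin y = eps * sin (y - c))
    by (replace y with (IZR k * PI + (y - c)) at 1 by (unfold c; ring); apply sin_pi_multiple_add).
  assert (Hyc : c < y).
  { destruct Hk as [[Hlt | Heq] _]; [exact Hlt|].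
    rewrite <- Heq, sin_eq_0_1 in Hw by (now exists k); lra. }
  assert (Hsyc : 0 < sin (y - c)) by (apply sin_gt_0; lra).
  assert (Hv : 0 < eps * v) by (rewrite Hy in Hw; nra).
  destruct (polar_upper_half (eps * u) (eps * v) Hv) as [t [Ht [Hu' Hv']]].
  replace ((eps * u) ^ 2 + (eps * v) ^ 2) with (u ^ 2 + v ^ 2) in Hu', Hv'
    by (replace ((eps * u) ^ 2) with (eps * eps * u ^ 2) by ring;
        replace ((eps * v) ^ 2) with (eps * eps * v ^ 2) by ring; rewrite Heps; ring).
  set (r := sqrt (u ^ 2 + v ^ 2)) in *.
  assert (Hr : 0 < r) by (apply sqrt_lt_R0; nra).
  exists (ln r, c + t); cbn [fst snd]; split; [|split]; [|reflexivity|].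
  - unfold Cexp; cbn [fst snd]; rewrite exp_ln by lra.
    unfold c; rewrite sin_pi_multiple_add, cos_pi_multiple_add; fold c eps.
    f_equal.
    + replace u with (eps * (eps * u)) by (rewrite <- Rmult_assoc, Heps; ring).
      rewrite Hu'; ring.
    + replace v with (eps * (eps * v)) by (rewrite <- Rmult_assoc, Heps; ring).
      rewrite Hv'; ring.
  - exists k; fold c; lra.
Qed.

(** * Orbits of open sets meet the real axis *)

Definition forward_orbit (U : Cplx -> Prop) (w : Cplx) : Prop :=
  exists z m, U z /\ iterate Cexp m z = w.

Definition hball (p : Cplx) (T : R) (w : Cplx) : Prop :=
  0 < snd w * snd p /\ sqdist w p < T * (snd w * snd p).

Definition orbit_covers_hball (U : Cplx -> Prop) (p : Cplx) (T : R) : Prop :=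
  forall w, hball p T w -> forward_orbit U w.

Lemma iterate_Cexp_S m z : iterate Cexp (S m) z = Cexp (iterate Cexp m z).
Proof. reflexivity. Qed.

Lemma snd_Cexp z : snd (Cexp z) = exp (fst z) * sin (snd z).
Proof. reflexivity. Qed.

Lemma forward_orbit_Cexp U w : forward_orbit U w -> forward_orbit U (Cexp w).
Proof. intros (z & m & Hz & Hm); exists z, (S m); now rewrite iterate_Cexp_S, Hm. Qed.

Lemma orbit_covers_hball_le U p T T' :
  orbit_covers_hball U p T -> T' <= T -> orbit_covers_hball U p T'.
Proof. intros Hcov HT w [Hw1 Hw2]; apply Hcov; split; nra. Qed.

Lemma orbit_covers_hball_Cexp U p T k :
  orbit_covers_hball U p T -> admissible_factor k (snd p) -> 0 < T ->
  orbit_covers_hball U (Cexp p) (T / k).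
Proof.
  intros Hcov Hk HT w [Hw1 Hw2]; pose proof (admissible_factor_bounds k _ Hk).
  assert (Hws : 0 < snd w * sin (snd p)).
  { rewrite snd_Cexp in Hw1; pose proof (exp_pos (fst p)).
    apply (Rmult_lt_reg_l (exp (fst p))); nra. }
  destruct (Cexp_log_same_strip (snd p) w Hws) as (z & <- & _ & HS).
  pose proof (Cexp_expands_in_strip p z k HS Hk) as Hexp.
  destruct (same_strip_spec _ _ HS) as [_ [_ Hzp]].
  apply forward_orbit_Cexp, Hcov; split; [nra|].
  set (P := snd (Cexp z) * snd (Cexp p)) in *.
  apply (Rmult_lt_reg_r P); [lra|].
  assert (k * sqdist (Cexp z) (Cexp p) * (snd z * snd p) < k * (T / k * P) * (snd z * snd p))
    by (apply Rmult_lt_compat_r; [nra | apply Rmult_lt_compat_l; lra]).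
  replace (k * (T / k * P) * (snd z * snd p)) with (T * (snd z * snd p) * P) in * by (field; lra).
  lra.
Qed.

Lemma Cdist_lt_of_sqdist w z r : 0 < r -> sqdist w z < r ^ 2 -> Cdist w z < r.
Proof.
  intros Hr Hd; unfold Cdist, sqdist in *; rewrite !Rsqr_pow2.
  rewrite <- (sqrt_pow2 r) by lra; apply sqrt_lt_1_alt; split; [|exact Hd].
  pose proof (pow2_ge_0 (fst w - fst z)); pose proof (pow2_ge_0 (snd w - snd z)); lra.
Qed.

Lemma hball_sub_disk p r w : snd p <> 0 -> 0 < r ->
  hball p (r ^ 2 / (Rabs (snd p) * (Rabs (snd p) + r))) w -> sqdist w p < r ^ 2.
Proof.
  intros Hp Hr [Hw1 Hw2]; set (a := Rabs (snd p)) in *.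
  assert (Ha : 0 < a) by (now apply Rabs_pos_lt).
  set (D := sqdist w p) in *; set (d := sqrt D).
  assert (Hdd : d * d = D) by (apply sqrt_sqrt, sqdist_ge_0).
  assert (Hd0 : 0 <= d) by apply sqrt_pos.
  assert (Hdy : Rabs (snd w - snd p) <= d).
  { assert (Rabs (snd w - snd p) ^ 2 <= D)
      by (rewrite pow2_abs; unfold D, sqdist; pose proof (pow2_ge_0 (fst w - fst p)); lra).
    pose proof (Rabs_pos (snd w - snd p)); nra. }
  assert (Hyy : snd w * snd p <= a * (a + d)).
  { assert (Rabs (snd w) <= a + d)
      by (pose proof (Rabs_triang_inv (snd w) (snd p)) as Ht; fold a in Ht; lra).
    assert (snd w * snd p = Rabs (snd w) * a)
      by (unfold a; rewrite <- Rabs_mult, Rabs_pos_eq; lra).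
    pose proof (Rabs_pos (snd w)); nra. }
  assert (HT : D * (a + r) < r ^ 2 * (a + d)).
  { assert (HD : D < r ^ 2 / (a * (a + r)) * (a * (a + d))).
    { apply (Rlt_le_trans _ _ _ Hw2), Rmult_le_compat_l; [|exact Hyy].
      apply Rlt_le, Rdiv_lt_0_compat; nra. }
    replace (r ^ 2 / (a * (a + r)) * (a * (a + d))) with (r ^ 2 * (a + d) / (a + r)) in HD
      by (field; lra).
    apply (Rmult_lt_reg_r (/ (a + r))); [apply Rinv_0_lt_compat; lra|].
    rewrite Rmult_assoc, Rinv_r, Rmult_1_r by lra; exact HD. }
  (* [d |-> d ^ 2 / (a + d)] is increasing, so [HT] forces [d < r]. *)
  destruct (Rlt_dec d r) as [Hdr|Hdr]; [nra|].
  assert (d * r * (d - r) >= 0) by (apply Rle_ge, Rmult_le_pos; nra).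
  nra.
Qed.

Lemma sin_zero_above y : 1 / 2 <= y ->
  exists c, sin c = 0 /\ 0 < c * y /\ (c - y) ^ 2 < (2 * PI + 1) * (c * y).
Proof.
  intros Hy; pose proof PI_bounds; destruct (pi_floor y) as [k Hk].
  assert (Hk0 : (0 <= k)%Z).
  { destruct (Z_lt_le_dec k 0) as [Hneg|]; [|assumption].
    assert (IZR k <= -1) by (apply IZR_le; lia); nra. }
  exists (IZR (k + 1) * PI); rewrite plus_IZR.
  split; [apply sin_eq_0_1; exists (k + 1)%Z; now rewrite plus_IZR|].
  apply IZR_le in Hk0; simpl in Hk0.
  replace ((IZR k + 1) * PI) with (IZR k * PI + PI) by ring.
  assert (0 <= IZR k * PI) by nra.
  assert ((IZR k * PI + PI - y) ^ 2 <= PI ^ 2) by nra.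
  split; nra.
Qed.

Lemma hball_meets_sin_zero p : 1 / 2 <= Rabs (snd p) ->
  exists c, sin c = 0 /\ hball p (2 * PI + 1) (fst p, c).
Proof.
  intros Hp; unfold hball, sqdist; cbn [fst snd]; replace (fst p - fst p) with 0 by ring.
  destruct (Rle_dec 0 (snd p)).
  - rewrite Rabs_pos_eq in Hp by lra.
    destruct (sin_zero_above (snd p) Hp) as (c & Hc & Hcy & Hd); exists c; split; [|split]; nra.
  - rewrite Rabs_left in Hp by lra.
    destruct (sin_zero_above (- snd p) Hp) as (c & Hc & Hcy & Hd).
    exists (- c); rewrite sin_neg, Hc; split; [|split]; nra.
Qed.

Lemma eventually_ge_of_increments (a : nat -> R) N c B : 0 < c ->
  (forall n, (N <= n)%nat -> a n + c <= a (S n)) ->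
  exists n1, forall n, (n1 <= n)%nat -> B <= a n.
Proof.
  intros Hc Hinc.
  assert (Hlin : forall j, a N + c * INR j <= a (N + j)%nat).
  { induction j as [|j IH]; [rewrite Nat.add_0_r; simpl; lra|].
    rewrite Nat.add_succ_r, S_INR; pose proof (Hinc (N + j)%nat ltac:(lia)); lra. }
  destruct (exists_nat_gt ((B - a N) / c)) as [j0 Hj0].
  exists (N + j0)%nat; intros n Hn.
  replace n with (N + (n - N))%nat by lia.
  pose proof (Hlin (n - N)%nat).
  assert (INR j0 <= INR (n - N)) by (apply le_INR; lia).
  assert (B - a N < c * INR j0)
    by (apply (Rmult_lt_reg_r (/ c)); [now apply Rinv_0_lt_compat|];
        rewrite (Rmult_comm c), Rmult_assoc, Rinv_r, Rmult_1_r by lra; exact Hj0).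
  nra.
Qed.

(* Near the real axis the real part increases by [3/4] at each step; once it is at least
   [1], the imaginary part is multiplied by at least [3/2]. *)
Lemma Cexp_orbit_im_recurrent (z : nat -> Cplx) :
  (forall n, z (S n) = Cexp (z n)) -> (forall n, snd (z n) <> 0) ->
  forall N, exists n, (N <= n)%nat /\ 1 / 2 <= Rabs (snd (z n)).
Proof.
  intros Hz Hy N; apply NNPP; intros Hnot.
  assert (Hsmall : forall n, (N <= n)%nat -> Rabs (snd (z n)) < 1 / 2).
  { intros n Hn; apply Rnot_le_lt; intros Hge; apply Hnot; now exists n. }
  pose proof PI_bounds.
  destruct (eventually_ge_of_increments (fun n => fst (z n)) N (3 / 4) 1 ltac:(lra)) as [n1 Hre].
  { intros n Hn; rewrite Hz; unfold Cexp; cbn [fst].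
    pose proof (Hsmall n Hn); pose proof (cos_ge_quadratic (snd (z n))).
    assert (snd (z n) ^ 2 <= 1 / 4)
      by (rewrite <- pow2_abs; pose proof (Rabs_pos (snd (z n))); nra).
    pose proof (exp_pos (fst (z n))); pose proof (exp_ge_affine (fst (z n))); nra. }
  destruct (eventually_ge_of_increments (fun n => ln (Rabs (snd (z n)))) (N + n1) (ln (3 / 2))
              (ln (1 / 2))) as [n2 Him].
  { rewrite <- ln_1; apply ln_increasing; lra. }
  { intros n Hn; rewrite Hz, snd_Cexp, Rabs_mult, (Rabs_pos_eq (exp _)) by (apply Rlt_le, exp_pos).
    pose proof (Hre n ltac:(lia)); pose proof (Hsmall n ltac:(lia)).
    set (x := fst (z n)) in *; set (y := snd (z n)) in *.
    assert (Hy0 : 0 < Rabs y) by (apply Rabs_pos_lt, Hy).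
    pose proof (Rabs_sin_ge y ltac:(lra)).
    assert (Rabs y ^ 3 <= Rabs y / 4) by nra.
    pose proof (exp_ineq1_le x).
    rewrite <- ln_mult by lra; apply ln_le_compat; [nra|].
    apply Rle_trans with (2 * (Rabs y - Rabs y ^ 3 / 6)); [nra|].
    apply Rmult_le_compat; lra. }
  set (n := (N + n1 + n2)%nat).
  pose proof (Him n ltac:(unfold n; lia)) as Hln; pose proof (Hsmall n ltac:(unfold n; lia)).
  assert (0 < Rabs (snd (z n))) by (apply Rabs_pos_lt, Hy).
  pose proof (ln_increasing (Rabs (snd (z n))) (1 / 2)); lra.
Qed.

Section OrbitAvoidingRealAxis.

Variable U : Cplx -> Prop.
Variable z0 : Cplx.
Hypothesis Hz0 : U z0.
Hypothesis Havoid : forall z m, U z -> snd (iterate Cexp m z) <> 0.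

Let orbit n := iterate Cexp n z0.

Lemma orbit_covers_hball_shift n d T : 0 < T ->
  orbit_covers_hball U (orbit n) T -> orbit_covers_hball U (orbit (n + d)) T.
Proof.
  intros HT Hcov; induction d as [|d IH]; [now rewrite Nat.add_0_r|].
  rewrite Nat.add_succ_r; unfold orbit; rewrite iterate_Cexp_S; fold (orbit (n + d)).
  replace T with (T / 1) by field.
  apply orbit_covers_hball_Cexp; [exact IH | now left | exact HT].
Qed.

Lemma orbit_covers_hball_grow n T : 0 < T -> orbit_covers_hball U (orbit n) T ->
  exists n', orbit_covers_hball U (orbit n') (T * (100 / 99)).
Proof.
  intros HT Hcov.
  destruct (Cexp_orbit_im_recurrent orbit (fun n => eq_refl)
              (fun n Hn => Havoid z0 n Hz0 Hn) n) as (n' & Hn' & Hy).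
  exists (S n'); unfold orbit; rewrite iterate_Cexp_S; fold (orbit n').
  replace (T * (100 / 99)) with (T / (99 / 100)) by field.
  replace n' with (n + (n' - n))%nat by lia.
  apply orbit_covers_hball_Cexp; [now apply orbit_covers_hball_shift | | exact HT].
  right; split; [reflexivity|]; now replace (n + (n' - n))%nat with n' by lia.
Qed.

Lemma orbit_covers_large_hball T B : 0 < T -> orbit_covers_hball U z0 T ->
  exists n, orbit_covers_hball U (orbit n) B.
Proof.
  intros HT Hcov.
  assert (Hpow : forall j, exists n, orbit_covers_hball U (orbit n) (T * (100 / 99) ^ j)).
  { induction j as [|j [n Hn]]; [exists 0%nat; now rewrite pow_O, Rmult_1_r|].
    destruct (orbit_covers_hball_grow n (T * (100 / 99) ^ j)) as [n' Hn']; auto.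
    - apply Rmult_lt_0_compat; [lra | apply pow_lt; lra].
    - exists n'; now replace (T * (100 / 99) ^ S j) with (T * (100 / 99) ^ j * (100 / 99))
        by (simpl; ring). }
  destruct (exists_nat_gt (99 * B / T)) as [j Hj]; destruct (Hpow j) as [n Hn].
  exists n; apply (orbit_covers_hball_le _ _ _ _ Hn).
  pose proof (poly j (1 / 99) ltac:(lra)) as Hbern.
  replace (1 + 1 / 99) with (100 / 99) in Hbern by field.
  assert (HB : B <= T * (1 + INR j * (1 / 99))).
  { apply (Rmult_le_reg_r (99 / T)); [apply Rdiv_lt_0_compat; lra|].
    replace (T * (1 + INR j * (1 / 99)) * (99 / T)) with (99 + INR j) by (field; lra).
    replace (B * (99 / T)) with (99 * B / T) by (field; lra).
    pose proof (pos_INR j); lra. }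
  apply Rle_trans with (1 := HB), Rmult_le_compat_l; lra.
Qed.

Lemma orbit_avoiding_real_axis_absurd : C_open U -> False.
Proof.
  intros HU; destruct (HU z0 Hz0) as (r & Hr & Hball).
  assert (Hy0 : snd z0 <> 0) by exact (Havoid z0 0 Hz0).
  set (T0 := r ^ 2 / (Rabs (snd z0) * (Rabs (snd z0) + r))).
  assert (HT0 : 0 < T0).
  { pose proof (Rabs_pos_lt _ Hy0).
    apply Rdiv_lt_0_compat; [apply pow_lt; lra | apply Rmult_lt_0_compat; lra]. }
  assert (Hcov0 : orbit_covers_hball U z0 T0).
  { intros w Hw; exists w, 0%nat; split; [|reflexivity].
    apply Hball, Cdist_lt_of_sqdist; [exact Hr|]; now apply hball_sub_disk. }
  destruct (orbit_covers_large_hball T0 (2 * PI + 1) HT0 Hcov0) as [n Hn].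
  destruct (Cexp_orbit_im_recurrent orbit (fun n => eq_refl)
              (fun n Hn => Havoid z0 n Hz0 Hn) n) as (n' & Hn' & Hy).
  replace n' with (n + (n' - n))%nat in Hy by lia.
  pose proof (orbit_covers_hball_shift n (n' - n) (2 * PI + 1) ltac:(pose proof PI_bounds; lra) Hn)
    as Hcov.
  destruct (hball_meets_sin_zero _ Hy) as (c & Hc & Hw).
  destruct (Hcov _ Hw) as (z & m & Hz & Hm).
  apply (Havoid z (S m) Hz); rewrite iterate_Cexp_S, Hm, snd_Cexp; cbn [snd]; rewrite Hc; ring.
Qed.

End OrbitAvoidingRealAxis.

Lemma orbit_meets_real_axis U : C_open U -> (exists z, U z) ->
  exists z m, U z /\ snd (iterate Cexp m z) = 0.
Proof.
  intros HU [z0 Hz0]; apply NNPP; intros Hnot.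
  apply (orbit_avoiding_real_axis_absurd U z0 Hz0); [|exact HU].
  intros z m Hz Hm; apply Hnot; now exists z, m.
Qed.

(** * Large disks in the image of an open set *)

Definition Cmul (z w : Cplx) : Cplx :=
  (fst z * fst w - snd z * snd w, fst z * snd w + snd z * fst w).

Lemma Cexp_add (a b : Cplx) : Cexp (fst a + fst b, snd a + snd b) = Cmul (Cexp a) (Cexp b).
Proof.
  unfold Cexp, Cmul; cbn [fst snd]; rewrite exp_plus, cos_plus, sin_plus; f_equal; ring.
Qed.

Lemma sqdist_Cmul (c u v : Cplx) :
  sqdist (Cmul c u) (Cmul c v) = (fst c ^ 2 + snd c ^ 2) * sqdist u v.
Proof. unfold sqdist, Cmul; cbn [fst snd]; ring. Qed.

Lemma Cexp_sqnorm a : fst (Cexp a) ^ 2 + snd (Cexp a) ^ 2 = exp (fst a) ^ 2.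
Proof.
  unfold Cexp; cbn [fst snd]; pose proof (sin2_cos2 (snd a)); unfold Rsqr in *; nra.
Qed.

Lemma Cmul_Cexp_onto a w : exists u, Cmul (Cexp a) u = w.
Proof.
  destruct a as [x y], w as [w1 w2]; unfold Cmul, Cexp; cbn [fst snd].
  exists (exp (- x) * (w1 * cos y + w2 * sin y), exp (- x) * (w2 * cos y - w1 * sin y));
    cbn [fst snd].
  pose proof (sin2_cos2 y) as Hy; unfold Rsqr in Hy.
  assert (Hx : exp x * exp (- x) = 1) by (rewrite <- exp_plus, Rplus_opp_r; apply exp_0).
  f_equal.
  - transitivity (exp x * exp (- x) * (w1 * (sin y * sin y + cos y * cos y))); [ring|].
    rewrite Hx, Hy; ring.
  - transitivity (exp x * exp (- x) * (w2 * (sin y * sin y + cos y * cos y))); [ring|].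
    rewrite Hx, Hy; ring.
Qed.

Lemma Cexp_log_near_one u : 4 * sqdist u (1, 0) <= 1 ->
  exists z, Cexp z = u /\ sqdist z (0, 0) <= 9 * sqdist u (1, 0).
Proof.
  destruct u as [u1 u2]; unfold sqdist; cbn [fst snd]; intros Hu.
  assert (Hu1 : 1 / 2 <= u1) by nra.
  set (r := sqrt (u1 ^ 2 + u2 ^ 2)).
  assert (Hrr : r * r = u1 ^ 2 + u2 ^ 2) by (apply sqrt_sqrt; nra).
  assert (Hr0 : 0 <= r) by apply sqrt_pos.
  assert (Hru : u1 <= r) by nra.
  assert (Hr1 : (r - 1) ^ 2 <= (u1 - 1) ^ 2 + (u2 - 0) ^ 2) by nra.
  assert (Hsq : sqrt (1 + (u2 / u1)²) = r / u1).
  { rewrite <- (sqrt_Rsqr (r / u1))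
      by (apply Rmult_le_pos; [lra | left; apply Rinv_0_lt_compat; lra]).
    f_equal; unfold Rsqr; replace (r / u1 * (r / u1)) with (r * r / (u1 * u1)) by (field; lra).
    rewrite Hrr; field; lra. }
  set (phi := atan (u2 / u1)).
  exists (ln r, phi); cbn [fst snd]; split.
  - unfold Cexp, phi; cbn [fst snd]; rewrite exp_ln, cos_atan, sin_atan, Hsq by lra.
    f_equal; field; lra.
  - assert (Hphi : phi ^ 2 <= 4 * u2 ^ 2).
    { pose proof (Rabs_atan_le (u2 / u1)) as Ha; fold phi in Ha.
      assert (Rabs (u2 / u1) <= 2 * Rabs u2).
      { unfold Rdiv; rewrite Rabs_mult, (Rabs_pos_eq (/ u1)) by (left; apply Rinv_0_lt_compat; lra).
        assert (/ u1 <= 2) by (replace 2 with (/ (1 / 2)) by field; apply Rinv_le_contravar; lra).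
        pose proof (Rabs_pos u2); nra. }
      rewrite <- (pow2_abs phi), <- (pow2_abs u2); pose proof (Rabs_pos phi); nra. }
    pose proof (ln_sq_le r ltac:(lra)); pose proof (pow2_ge_0 (u1 - 1)); nra.
Qed.

Lemma Cexp_local_inverse (a w : Cplx) : 4 * sqdist w (Cexp a) <= exp (fst a) ^ 2 ->
  exists z, Cexp z = w /\ sqdist z a * exp (fst a) ^ 2 <= 9 * sqdist w (Cexp a).
Proof.
  intros Hw; destruct (Cmul_Cexp_onto a w) as [u <-].
  assert (Hdist : sqdist (Cmul (Cexp a) u) (Cexp a) = exp (fst a) ^ 2 * sqdist u (1, 0)).
  { rewrite <- Cexp_sqnorm, <- sqdist_Cmul; f_equal.
    destruct (Cexp a) as [c s]; unfold Cmul; cbn [fst snd]; f_equal; ring. }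
  rewrite Hdist in *.
  assert (He : 0 < exp (fst a) ^ 2) by (apply pow_lt, exp_pos).
  destruct (Cexp_log_near_one u) as (v & Hv & Hbound).
  { apply (Rmult_le_reg_l (exp (fst a) ^ 2)); lra. }
  exists (fst a + fst v, snd a + snd v); split.
  - now rewrite Cexp_add, Hv.
  - replace (sqdist (fst a + fst v, snd a + snd v) a) with (sqdist v (0, 0))
      by (unfold sqdist; cbn [fst snd]; ring).
    nra.
Qed.

Lemma iterate_Cexp_locally_onto N z rho : 0 < rho -> exists delta, 0 < delta /\
  forall w, sqdist w (iterate Cexp N z) < delta ->
  exists zeta, sqdist zeta z < rho /\ iterate Cexp N zeta = w.
Proof.
  revert z rho; induction N as [|N IH]; intros z rho Hrho.
  - exists rho; split; [exact Hrho|]; intros w Hw; now exists w.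
  - destruct (IH z rho Hrho) as (d & Hd & Hpre).
    set (p := iterate Cexp N z); set (E := exp (fst p) ^ 2).
    assert (HE : 0 < E) by (apply pow_lt, exp_pos).
    exists (Rmin (E / 4) (d * E / 9)); split; [apply Rmin_pos; apply Rdiv_lt_0_compat; nra|].
    intros w Hw; rewrite iterate_Cexp_S in Hw; fold p in Hw.
    pose proof (Rmin_l (E / 4) (d * E / 9)); pose proof (Rmin_r (E / 4) (d * E / 9)).
    destruct (Cexp_local_inverse p w) as (z' & <- & Hz'); [fold E; lra|].
    destruct (Hpre z') as (zeta & Hzeta & Hit).
    { apply (Rmult_lt_reg_r E); [lra | fold E in Hz'; fold p; lra]. }
    exists zeta; split; [exact Hzeta|]; now rewrite iterate_Cexp_S, Hit.
Qed.

Lemma Cexp_real x : Cexp (x, 0) = (exp x, 0).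
Proof. unfold Cexp; cbn [fst snd]; rewrite cos_0, sin_0; f_equal; ring. Qed.

Lemma iterate_Cexp_real m x : iterate Cexp m (x, 0) = (Nat.iter m exp x, 0).
Proof.
  induction m as [|m IH]; [reflexivity|].
  now rewrite iterate_Cexp_S, IH, Cexp_real.
Qed.

Lemma iter_exp_ge m x : x + INR m <= Nat.iter m exp x.
Proof.
  induction m as [|m IH]; [simpl; lra|].
  rewrite S_INR; simpl Nat.iter; pose proof (exp_ineq1_le (Nat.iter m exp x)); lra.
Qed.

Lemma Cexp_pullback_at_real y w : 6 <= y -> sqdist w (exp y, 0) <= 9 / 4 ->
  exists z, Cexp z = w /\ sqdist z (y, 0) <= sqdist w (exp y, 0) / 4.
Proof.
  intros Hy Hw; pose proof (exp_ineq1_le y).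
  assert (36 <= exp y ^ 2) by nra.
  destruct (Cexp_local_inverse (y, 0) w) as (z & Hz & Hbound);
    cbn [fst] in *; rewrite Cexp_real in *; [nra|].
  exists z; split; [exact Hz|]; pose proof (sqdist_ge_0 z (y, 0)); nra.
Qed.

Lemma iterate_Cexp_pullback_at_real m : forall x w, 6 <= x ->
  sqdist w (Nat.iter m exp x, 0) <= 9 / 4 ->
  exists z, iterate Cexp m z = w /\ sqdist z (x, 0) <= 9 / 4 / 4 ^ m.
Proof.
  induction m as [|m IH]; intros x w Hx Hw.
  - exists w; split; [reflexivity|]; simpl in *; lra.
  - rewrite Nat.iter_succ_r in Hw.
    pose proof (exp_ineq1_le x).
    destruct (IH (exp x) w ltac:(lra) Hw) as (z' & Hz' & Hbound').
    assert (1 <= 4 ^ m) by (apply pow_R1_Rle; lra).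
    assert (9 / 4 / 4 ^ m <= 9 / 4)
      by (apply (Rmult_le_reg_r (4 ^ m)); [lra|]; field_simplify; lra).
    destruct (Cexp_pullback_at_real x z' Hx ltac:(lra)) as (z & Hz & Hbound).
    exists z; split.
    + unfold iterate; rewrite Nat.iter_succ_r; fold (iterate Cexp m (Cexp z)); now rewrite Hz.
    + replace (9 / 4 / 4 ^ S m) with (9 / 4 / 4 ^ m / 4) by (simpl; field; lra); lra.
Qed.

Lemma iterate_Cexp_covers_disk m x w : 6 <= x ->
  4 * sqdist w (Nat.iter (S m) exp x, 0) <= Nat.iter (S m) exp x ^ 2 ->
  exists z, iterate Cexp (S m) z = w /\ sqdist z (x, 0) <= 9 / 4 / 4 ^ m.
Proof.
  intros Hx Hw; set (y := Nat.iter m exp x) in *.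
  change (Nat.iter (S m) exp x) with (exp y) in Hw.
  pose proof (iter_exp_ge m x); pose proof (pos_INR m).
  destruct (Cexp_local_inverse (y, 0) w) as (z' & Hz' & Hbound);
    cbn [fst] in *; rewrite Cexp_real in *; [lra|].
  destruct (iterate_Cexp_pullback_at_real m x z' Hx) as (z & Hz & Hzb).
  { fold y; assert (0 < exp y ^ 2) by (apply pow_lt, exp_pos).
    apply (Rmult_le_reg_r (exp y ^ 2)); lra. }
  exists z; split; [|exact Hzb].
  change (iterate Cexp (S m) z) with (Cexp (iterate Cexp m z)); now rewrite Hz.
Qed.

Lemma orbit_covers_large_disk U z0 N A : C_open U -> U z0 -> snd (iterate Cexp N z0) = 0 ->
  exists n X, A <= X /\
    forall w, 4 * sqdist w (X, 0) <= X ^ 2 -> exists zeta, U zeta /\ iterate Cexp n zeta = w.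
Proof.
  intros HU Hz0 HN; destruct (HU z0 Hz0) as (r & Hr & Hball).
  set (p := fst (iterate Cexp N z0)).
  assert (Hp : iterate Cexp N z0 = (p, 0))
    by (rewrite <- HN; unfold p; now destruct (iterate Cexp N z0)).
  (* Seven more steps push the real orbit point beyond [6]. *)
  set (x := Nat.iter 6 exp (exp p)).
  assert (Hx : 6 <= x).
  { unfold x; pose proof (iter_exp_ge 6 (exp p)); pose proof (exp_pos p); simpl INR in *; lra. }
  assert (Hit : iterate Cexp (7 + N) z0 = (x, 0)).
  { unfold iterate; rewrite Nat.iter_add; fold (iterate Cexp N z0); rewrite Hp.
    exact (iterate_Cexp_real 7 p). }
  destruct (iterate_Cexp_locally_onto (7 + N) z0 (r ^ 2) ltac:(nra)) as (d & Hd & Hloc).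
  rewrite Hit in Hloc.
  destruct (exists_nat_gt (Rmax A (9 / (4 * d)))) as [m Hm].
  pose proof (Rmax_l A (9 / (4 * d))); pose proof (Rmax_r A (9 / (4 * d))).
  exists (S m + (7 + N))%nat, (Nat.iter (S m) exp x); split.
  { pose proof (iter_exp_ge (S m) x); rewrite S_INR in *; lra. }
  intros w Hw; destruct (iterate_Cexp_covers_disk m x w Hx Hw) as (z' & Hz' & Hbound).
  assert (Hsmall : 9 / 4 / 4 ^ m < d).
  { pose proof (poly m 3 ltac:(lra)) as Hbern; replace (1 + 3) with 4 in Hbern by ring.
    assert (9 / 4 < d * INR m).
    { apply (Rmult_lt_reg_r (/ d)); [now apply Rinv_0_lt_compat|].
      replace (d * INR m * / d) with (INR m) by (field; lra).
      replace (9 / 4 * / d) with (9 / (4 * d)) by (field; lra); lra. }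
    apply (Rmult_lt_reg_r (4 ^ m)); [apply pow_lt; lra|].
    replace (9 / 4 / 4 ^ m * 4 ^ m) with (9 / 4) by (field; apply pow_nonzero; lra).
    pose proof (pos_INR m); nra. }
  destruct (Hloc z' ltac:(lra)) as (zeta & Hzeta & Hzit).
  exists zeta; split.
  - apply Hball, Cdist_lt_of_sqdist; assumption.
  - unfold iterate; rewrite Nat.iter_add; fold (iterate Cexp (7 + N) zeta); now rewrite Hzit.
Qed.

Lemma open_has_nonreal_point V v0 : C_open V -> V v0 -> exists v, V v /\ snd v <> 0.
Proof.
  intros HV Hv0; destruct (Req_dec (snd v0) 0) as [E|E]; [|now exists v0].
  destruct (HV v0 Hv0) as (r & Hr & Hball).
  exists (fst v0, r / 2); cbn [snd]; split; [|lra].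
  apply Hball, Cdist_lt_of_sqdist; [exact Hr|].
  unfold sqdist; cbn [fst snd]; rewrite E; nra.
Qed.

Lemma sin_sign_in_window Y0 s : s <> 0 -> exists Y, Y0 <= Y <= Y0 + 2 * PI /\ 0 < s * sin Y.
Proof.
  intros Hs; pose proof PI_bounds.
  assert (S1 : sin (Y0 + PI) = - sin Y0) by (rewrite sin_plus, sin_PI, cos_PI; ring).
  assert (S2 : sin (Y0 + PI / 2) = cos Y0) by (rewrite sin_plus, sin_PI2, cos_PI2; ring).
  assert (S3 : sin (Y0 + PI / 2 + PI) = - cos Y0) by (rewrite sin_plus, sin_PI, cos_PI, S2; ring).
  assert (Hsc : sin Y0 <> 0 \/ cos Y0 <> 0).
  { destruct (Req_dec (sin Y0) 0) as [E|E]; [right|now left].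
    intros F; pose proof (sin2_cos2 Y0) as Hsc; rewrite E, F in Hsc; unfold Rsqr in Hsc; lra. }
  destruct Hsc as [Hsc|Hsc].
  - destruct (Rlt_dec 0 (s * sin Y0)); [exists Y0; split; [lra|assumption]|].
    exists (Y0 + PI); rewrite S1; split; [lra|].
    assert (s * sin Y0 <> 0) by (now apply Rmult_integral_contrapositive); nra.
  - destruct (Rlt_dec 0 (s * cos Y0)); [exists (Y0 + PI / 2); rewrite S2; split; [lra|assumption]|].
    exists (Y0 + PI / 2 + PI); rewrite S3; split; [lra|].
    assert (s * cos Y0 <> 0) by (now apply Rmult_integral_contrapositive); nra.
Qed.

(* Take a logarithm [w1] of [v] with imaginary part just above [exp (X - 1)], then a
   logarithm of [w1] with imaginary part near [PI / 2]: its real part is [X +- 1]. *)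
Lemma Cexp2_preimage_near v : snd v <> 0 ->
  exists A, forall X, A <= X -> exists w, 4 * sqdist w (X, 0) <= X ^ 2 /\ Cexp (Cexp w) = v.
Proof.
  intros Hv; pose proof PI_bounds.
  set (L := ln (sqrt (fst v ^ 2 + snd v ^ 2))).
  exists (4 * PI + Rabs L + 20); intros X HX.
  assert (HeX : X <= exp (X - 1)) by (pose proof (exp_ineq1_le (X - 1)); lra).
  destruct (sin_sign_in_window (exp (X - 1) + PI) (snd v) Hv) as (Y & HY & HYs).
  destruct (Cexp_log_same_strip Y v HYs) as (w1 & Hw1 & Hfst1 & HS1).
  destruct (same_strip_spec _ _ HS1) as [_ [Hd1 _]]; apply Rabs_def2 in Hd1.
  destruct w1 as [a1 t1]; cbn [fst snd] in *; fold L in Hfst1; subst a1.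
  assert (Ht1 : exp (X - 1) < t1 < exp (X - 1) + 4 * PI) by lra.
  destruct (Cexp_log_same_strip (PI / 2) (L, t1)) as (w & Hw & Hfst & HS).
  { rewrite sin_PI2; cbn [snd]; pose proof (Rabs_pos L); lra. }
  destruct (same_strip_spec _ _ HS) as [_ [Hd _]]; apply Rabs_def2 in Hd.
  cbn [fst snd] in Hfst.
  set (rho := sqrt (L ^ 2 + t1 ^ 2)) in Hfst.
  assert (Hrho : t1 <= rho <= Rabs L + t1).
  { pose proof (Rabs_pos L); unfold rho; split.
    - rewrite <- (sqrt_pow2 t1) at 1 by lra; apply sqrt_le_1_alt; pose proof (pow2_ge_0 L); lra.
    - rewrite <- (sqrt_pow2 (Rabs L + t1)) by lra; apply sqrt_le_1_alt.
      rewrite <- (pow2_abs L); nra. }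
  assert (Hre : X - 1 <= fst w <= X + 1).
  { rewrite Hfst, <- (ln_exp (X - 1)), <- (ln_exp (X + 1)); split; apply ln_le_compat;
      try (pose proof (exp_pos (X - 1)); lra).
    replace (X + 1) with (X - 1 + 2) by ring; rewrite exp_plus.
    pose proof (exp_ineq1_le 2); pose proof (Rabs_pos L); nra. }
  exists w; split.
  - unfold sqdist; cbn [fst snd].
    assert ((fst w - X) ^ 2 <= 1) by nra.
    assert ((snd w - 0) ^ 2 <= 36) by nra.
    pose proof (Rabs_pos L); nra.
  - now rewrite Hw, Hw1.
Qed.

Theorem mainTheorem8 :
  forall U V : Cplx -> Prop,
    C_open U -> (exists z, U z) ->
    C_open V -> (exists z, V z) ->
    exists n : nat, exists z : Cplx, U z /\ V (iterate Cexp n z).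
Proof.
  intros U V HU HUne HV [v0 Hv0].
  destruct (orbit_meets_real_axis U HU HUne) as (z0 & N & Hz0 & HN).
  destruct (open_has_nonreal_point V v0 HV Hv0) as (v & HvV & Hv).
  destruct (Cexp2_preimage_near v Hv) as [A HA].
  destruct (orbit_covers_large_disk U z0 N A HU Hz0 HN) as (n & X & HXA & Hdisk).
  destruct (HA X HXA) as (w & Hw & Hww).
  destruct (Hdisk w Hw) as (zeta & Hzeta & Hit).
  exists (S (S n)), zeta; split; [exact Hzeta|].
  now rewrite !iterate_Cexp_S, Hit, Hww.
Qed.
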